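(* Let $A$ be a cyclic Leibniz algebra generated by $a$, with notation as in the context. For $1\le j\le s$ and $1\le i\le n_j$ put $U_{j,i}=\{b\in A: p_j(L_a)^i(b)=0\}$. Then $A^2$ is abelian, $A^2=U_{1,n_1-1}\oplus U_{2,n_2}\oplus\cdots\oplus U_{s,n_s}$, and every $U_{j,i}$ with $(j,i)\neq(1,n_1)$ is a (two-sided) ideal of $A$.
   Context: A (left) Leibniz algebra is an algebra satisfying $x(yz)=(xy)z+y(xz)$ for all $x,y,z$; all algebras are finite-dimensional over a field $F$. $A$ is a cyclic Leibniz algebra generated by $a$: $A$ is generated as an algebra by the single element $a$, and with $a^1=a$, $a^{k+1}=aa^k$, the elements $a,a^2,\dots,a^n$ form a basis of $A$. Write $aa^n=\alpha_2a^2+\cdots+\alpha_na^n$. $L_a:A\to A$ is $b\mapsto ab$, with characteristic (and minimal) polynomial $p(x)=x^n-\alpha_nx^{n-1}-\cdots-\alpha_2x=p_1(x)^{n_1}\cdots p_s(x)^{n_s}$, the $p_j$ distinct monic irreducibles over $F$, $p_1(x)=x$. $A^2=AA$. *)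

From HB Require Import structures.
From mathcomp Require Import all_boot all_order all_algebra.
Set Implicit Arguments. Unset Strict Implicit. Unset Printing Implicit Defensive.
Import GRing.Theory.
Local Open Scope ring_scope.

Section LeibnizDefs.
Variables (F : fieldType) (A : vectType F) (mul : A -> A -> A).

Definition bilinear_mul : Prop :=
  (forall c x y z, mul (c *: x + y) z = c *: mul x z + mul y z) /\
  (forall c x y z, mul z (c *: x + y) = c *: mul z x + mul z y).

Definition leibniz : Prop :=
  forall x y z, mul x (mul y z) = mul (mul x y) z + mul y (mul x z).

(* a^1 = a, a^(k+1) = a a^k ;  apow a k = a^(k+1) *)
Fixpoint apow (a : A) (k : nat) : A :=
  if k is k'.+1 then mul a (apow a k') else a.

Definition cyclic_basis (a : A) (n : nat) : Prop :=
  basis_of fullv (mkseq (apow a) n).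

Definition Lmul (a : A) : 'End(A) := linfun (mul a).

Definition lfun_poly (q : {poly F}) (f : 'End(A)) : 'End(A) :=
  \sum_(i < size q) q`_i *: iter i (fun g => (f \o g)%VF) \1%VF.

Definition lfun_char_poly (f : 'End(A)) : {poly F} :=
  char_poly (passmx.mxof (vbasis fullv) (vbasis fullv) f).

Definition sqA : {vspace A} :=
  <<[seq mul x y | x <- vbasis (fullv : {vspace A}), y <- vbasis (fullv : {vspace A})]>>%VS.

Definition Usp (a : A) (P : nat -> {poly F}) (j i : nat) : {vspace A} :=
  lker (lfun_poly (P j ^+ i) (Lmul a)).

Definition is_ideal (U : {vspace A}) : Prop :=
  forall x y, x \in U -> mul x y \in U /\ mul y x \in U.

End LeibnizDefs.

From HB Require Import structures.
From mathcomp Require Import all_boot all_order all_algebra.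
Set Implicit Arguments. Unset Strict Implicit. Unset Printing Implicit Defensive.
Import GRing.Theory.
Local Open Scope ring_scope.

(* The argument rests on three facts.
   1. The Leibniz identity gives (xx)z = 0, hence a^k z = 0 for k >= 2.
      Writing y = h(L_a) a, this yields y x = h_0 (a x): every left
      multiplication is a scalar multiple of L_a, and A^2 = Im L_a
      left-annihilates A (so A^2 is abelian).
   2. a is a cyclic vector of L_a, so chi is the L_a-annihilator of a
      (Cayley-Hamilton and freeness of a, ..., a^n); hence
      Im L_a = ker (chi / X)(L_a).
   3. Primary decomposition: the kernel of a product of pairwise coprime
      polynomials in L_a is the direct sum of their kernels. The theorem follows by splitting A^2 = ker (chi/X)(L_a)
   along chi / X = X^(N_0 - 1) P_1^(N_1) ... ; each U_(j,i) other than U_(0,N_0)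
   lies in A^2 and is L_a-stable, hence is a two-sided ideal. *)

Section PolynomialsOfEndomorphisms.
Variables (F : fieldType) (A : vectType F).
Implicit Types (f : 'End(A)) (p q : {poly F}) (x : A).

Definition lfun_pow f i : 'End(A) := iter i (fun g => (f \o g)%VF) \1%VF.

Lemma lfun_powSl f i x : lfun_pow f i.+1 x = f (lfun_pow f i x).
Proof. by rewrite /lfun_pow /= comp_lfunE. Qed.

Lemma lfun_powSr f i x : lfun_pow f i.+1 x = lfun_pow f i (f x).
Proof.
elim: i x => [|i IH] x; first by rewrite lfun_powSl /lfun_pow /= !id_lfunE.
by rewrite lfun_powSl IH lfun_powSl.
Qed.

Lemma lfun_polyE q f x : lfun_poly q f x = \sum_(i < size q) q`_i *: lfun_pow f i x.
Proof. by rewrite sum_lfunE; apply: eq_bigr => i _; rewrite scale_lfunE. Qed.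

Lemma lfun_polyE_wide q f x m : (size q <= m)%N ->
  lfun_poly q f x = \sum_(i < m) q`_i *: lfun_pow f i x.
Proof.
move=> le_q_m; rewrite lfun_polyE (big_ord_widen m (fun i => q`_i *: lfun_pow f i x)) //.
rewrite big_mkcond; apply: eq_bigr => i _; case: ltnP => // le_q_i.
by rewrite nth_default // scale0r.
Qed.

Lemma lfun_poly0 f x : lfun_poly 0 f x = 0.
Proof. by rewrite lfun_polyE size_poly0 big_ord0. Qed.

Lemma lfun_polyD p q f x :
  lfun_poly (p + q) f x = lfun_poly p f x + lfun_poly q f x.
Proof.
pose m := maxn (size p) (size q).
rewrite (@lfun_polyE_wide _ _ _ m) ?size_polyD // (@lfun_polyE_wide p _ _ m) ?leq_maxl //.
rewrite (@lfun_polyE_wide q _ _ m) ?leq_maxr // -big_split /=.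
by apply: eq_bigr => i _; rewrite coefD scalerDl.
Qed.

Lemma lfun_polyZ c p f x : lfun_poly (c *: p) f x = c *: lfun_poly p f x.
Proof.
rewrite (@lfun_polyE_wide _ _ _ (size p)) ?size_scale_leq // lfun_polyE scaler_sumr.
by apply: eq_bigr => i _; rewrite coefZ scalerA.
Qed.

Lemma lfun_polyC c f x : lfun_poly c%:P f x = c *: x.
Proof.
by rewrite (@lfun_polyE_wide _ _ _ 1) ?size_polyC_leq1 // big_ord1 coefC id_lfunE.
Qed.

Lemma lfun_poly1 f x : lfun_poly 1 f x = x.
Proof. by rewrite -polyC1 lfun_polyC scale1r. Qed.

Lemma lfun_polyMX p f x : lfun_poly (p * 'X) f x = lfun_poly p f (f x).
Proof.
rewrite (@lfun_polyE_wide _ _ _ (size p).+1); last first.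
  by rewrite (leq_trans (size_polyMleq _ _)) // size_polyX addn2.
rewrite big_ord_recl coefMX eqxx scale0r add0r lfun_polyE.
by apply: eq_bigr => i _; rewrite coefMX lfun_powSr.
Qed.

Lemma lfun_polyXn k f x : lfun_poly 'X^k f x = lfun_pow f k x.
Proof.
rewrite lfun_polyE size_polyXn big_ord_recr /= coefXn eqxx scale1r big1 ?add0r //.
by move=> i _; rewrite coefXn ltn_eqF // scale0r.
Qed.

Lemma lfun_poly_comm q f x : lfun_poly q f (f x) = f (lfun_poly q f x).
Proof.
rewrite !lfun_polyE linear_sum; apply: eq_bigr => i _.
by rewrite linearZ -lfun_powSr lfun_powSl.
Qed.

Lemma lfun_polyM p q f x :
  lfun_poly (p * q) f x = lfun_poly p f (lfun_poly q f x).
Proof.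
elim/poly_ind: p x => [|p c IH] x; first by rewrite mul0r !lfun_poly0.
rewrite mulrDl -mulrA (mulrC 'X) mulrA mul_polyC lfun_polyD lfun_polyMX lfun_polyZ.
by rewrite IH lfun_poly_comm lfun_polyD lfun_polyMX lfun_polyC.
Qed.

Lemma lker_lfun_poly_dvd f p q : p %| q ->
  (lker (lfun_poly p f) <= lker (lfun_poly q f))%VS.
Proof.
move=> /divpK <-; apply/subvP => x; rewrite !memv_ker => /eqP px0.
by rewrite lfun_polyM px0 linear0.
Qed.

Lemma lker_lfun_poly_coprime f p q : coprimep p q ->
  lker (lfun_poly (p * q) f) = (lker (lfun_poly p f) + lker (lfun_poly q f))%VS /\
  (lker (lfun_poly p f) :&: lker (lfun_poly q f) = 0)%VS.
Proof.
case/Bezout_eq1_coprimepP => -[u v] /= Bezout.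
have split_x x : x = lfun_poly (u * p) f x + lfun_poly (v * q) f x.
  by rewrite -lfun_polyD Bezout lfun_poly1.
split.
  apply/subv_anti/andP; split; last first.
    by rewrite subv_add !lker_lfun_poly_dvd ?dvdp_mulIl ?dvdp_mulIr.
  apply/subvP => x; rewrite memv_ker => /eqP pqx0.
  rewrite [x]split_x addrC; apply: memv_add; rewrite memv_ker -lfun_polyM.
    by rewrite mulrC -mulrA (mulrC q) lfun_polyM pqx0 linear0.
  by rewrite mulrC -mulrA lfun_polyM pqx0 linear0.
apply/eqP; rewrite -subv0; apply/subvP => x /memv_capP[].
rewrite !memv_ker memv0 => /eqP px0 /eqP qx0.
by rewrite [x]split_x !lfun_polyM px0 qx0 !linear0 addr0.
Qed.

Lemma coprimep_prod_seq p (g : nat -> {poly F}) (r : seq nat) :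
  (forall k, k \in r -> coprimep p (g k)) -> coprimep p (\prod_(k <- r) g k).
Proof.
elim: r => [|k r IH] cop; first by rewrite big_nil coprimep1.
rewrite big_cons coprimepMr cop ?mem_head //= IH // => j jr.
by rewrite cop // in_cons jr orbT.
Qed.

Lemma lker_lfun_poly_prod f (g : nat -> {poly F}) (r : seq nat) : uniq r ->
  {in r &, forall j k, j != k -> coprimep (g j) (g k)} ->
  lker (lfun_poly (\prod_(j <- r) g j) f) = (\sum_(j <- r) lker (lfun_poly (g j) f))%VS
  /\ \dim (lker (lfun_poly (\prod_(j <- r) g j) f))
     = (\sum_(j <- r) \dim (lker (lfun_poly (g j) f)))%N.
Proof.
elim: r => [|k r IH] /=.
  move=> _ _; rewrite !big_nil.
  have -> : lker (lfun_poly 1 f) = 0%VS.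
    by apply/vspaceP => x; rewrite memv_ker memv0 lfun_poly1.
  by rewrite dimv0.
case/andP => kNr r_uniq cop.
have cop_r : {in r &, forall j k, j != k -> coprimep (g j) (g k)}.
  by move=> j l jr lr; apply: cop; rewrite in_cons ?jr ?lr orbT.
have [IHsum IHdim] := IH r_uniq cop_r.
have cop_k : coprimep (g k) (\prod_(j <- r) g j).
  apply: coprimep_prod_seq => j jr; apply: cop; rewrite ?mem_head ?in_cons ?jr ?orbT //.
  by apply: contraNneq kNr => ->.
have [sumE capE] := lker_lfun_poly_coprime f cop_k.
rewrite !big_cons sumE IHsum; split => //.
by rewrite dimv_disjoint_sum -?IHsum // IHdim.
Qed.


End PolynomialsOfEndomorphisms.

Lemma coprimep_monic_irreducible (F : fieldType) (p q : {poly F}) :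
  p \is monic -> q \is monic -> irreducible_poly p -> irreducible_poly q ->
  p != q -> coprimep p q.
Proof.
move=> p_monic q_monic p_irr [_ q_irr] neq_pq.
rewrite irreducible_poly_coprime //; apply: contra neq_pq => dvd_pq.
have p_nconst : size p != 1%N by case: p_irr => /gtn_eqF ->.
by rewrite -eqp_monic // q_irr.
Qed.

Section CayleyHamilton.
Variables (F : fieldType) (A : vectType F).
Import passmx.

(* Cayley-Hamilton for matrices of any size (including 0), in coefficient form. *)
Lemma char_poly_mx_sum d (M : 'M[F]_d) :
  \sum_(i < size (char_poly M)) (char_poly M)`_i *: M ^+ i = 0.
Proof.
case: d M => [|d] M; first by apply/matrixP => -[].
have CH := Cayley_Hamilton M.
rewrite -{1}[char_poly M]coefK poly_def rmorph_sum /= in CH.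
rewrite -[RHS]CH; apply: eq_bigr => i _.
by rewrite horner_mxZ rmorphXn /= horner_mx_X.
Qed.

Let e := vbasis (fullv : {vspace A}).
Let e_basis : basis_of fullv e := vbasisP fullv.

Lemma mxof_lfun_pow (f : 'End(A)) i :
  mxof e e (lfun_pow f i) = mxof e e f ^+ i.
Proof.
elim: i => [|i IH]; first by rewrite mxof1 ?(basis_free e_basis).
by rewrite exprSr -IH /lfun_pow /= (@mxof_comp _ _ _ _ e e e e_basis).
Qed.

Lemma lfun_char_poly_annihilates (f : 'End(A)) : lfun_poly (lfun_char_poly f) f = 0.
Proof.
apply/eqP; rewrite -(mxof_eq0 e_basis e_basis) /lfun_poly linear_sum /=.
rewrite -[X in _ == X](char_poly_mx_sum (mxof e e f)); apply/eqP.
by apply: eq_bigr => i _; rewrite linearZ /= -mxof_lfun_pow.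
Qed.

End CayleyHamilton.

Section BilinearProduct.
Variables (F : fieldType) (A : vectType F) (mul : A -> A -> A).
Hypothesis mul_bilinear : bilinear_mul mul.

Lemma bimulDl x y z : mul (x + y) z = mul x z + mul y z.
Proof. by have := mul_bilinear.1 1 x y z; rewrite !scale1r. Qed.

Lemma bimulDr x y z : mul z (x + y) = mul z x + mul z y.
Proof. by have := mul_bilinear.2 1 x y z; rewrite !scale1r. Qed.

Lemma bimul0l z : mul 0 z = 0.
Proof. by apply: (addrI (mul 0 z)); rewrite -bimulDl !addr0. Qed.

Lemma bimul0r z : mul z 0 = 0.
Proof. by apply: (addrI (mul z 0)); rewrite -bimulDr !addr0. Qed.

Lemma bimulZl c x z : mul (c *: x) z = c *: mul x z.
Proof. by have := mul_bilinear.1 c x 0 z; rewrite !addr0 bimul0l addr0. Qed.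

Lemma bimulZr c x z : mul z (c *: x) = c *: mul z x.
Proof. by have := mul_bilinear.2 c x 0 z; rewrite !addr0 bimul0r addr0. Qed.

Lemma bimul_suml I (r : seq I) (G : I -> A) z :
  mul (\sum_(i <- r) G i) z = \sum_(i <- r) mul (G i) z.
Proof. exact: (big_morph (mul^~ z) (fun x y => bimulDl x y z) (bimul0l z)). Qed.

Lemma bimul_sumr I (r : seq I) (G : I -> A) z :
  mul z (\sum_(i <- r) G i) = \sum_(i <- r) mul z (G i).
Proof. exact: (big_morph (mul z) (fun x y => bimulDr x y z) (bimul0r z)). Qed.

Lemma LmulE a y : Lmul mul a y = mul a y.
Proof.
pose La : {linear A -> A} :=
  HB.pack (mul a) (GRing.isLinear.Build F A A *:%R (mul a) (fun c x y => mul_bilinear.2 c x y a)).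
exact: (lfunE La y).
Qed.

Hypothesis mul_leibniz : leibniz mul.

Lemma mul_sq_annihilates x z : mul (mul x x) z = 0.
Proof.
by apply: (addIr (mul x (mul x z))); rewrite add0r -mul_leibniz.
Qed.

(* Hence all powers a^k, k >= 2, are left annihilators (apow a k.+1 = a^(k+2)). *)
Lemma apow_annihilates a k z : mul (apow mul a k.+1) z = 0.
Proof.
elim: k z => [|k IH] z; first exact: mul_sq_annihilates.
by have := mul_leibniz a (apow mul a k.+1) z; rewrite IH bimul0r IH addr0.
Qed.

End BilinearProduct.

Section CyclicLeibnizAlgebra.
Variables (F : fieldType) (A : vectType F) (mul : A -> A -> A).
Hypothesis mul_bilinear : bilinear_mul mul.
Hypothesis mul_leibniz : leibniz mul.
Variables (a : A) (n : nat).
Hypothesis a_cyclic : cyclic_basis mul a n.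
Local Notation La := (Lmul mul a).

Lemma lfun_pow_apow k : lfun_pow La k a = apow mul a k.
Proof.
elim: k => [|k IH]; first by rewrite /lfun_pow /= id_lfunE.
by rewrite lfun_powSl IH LmulE.
Qed.

Lemma cyclic_poly_repr x : exists2 h : {poly F}, (size h <= n)%N & x = lfun_poly h La a.
Proof.
have: x \in <<mkseq (apow mul a) n>>%VS by case/andP: a_cyclic => /eqP -> _; exact: memvf.
elim: n x => [|k IH] x.
  by rewrite span_nil memv0 => /eqP ->; exists 0; rewrite ?size_poly0 ?lfun_poly0.
rewrite mkseqS (eq_span (mem_rcons _ _)) span_cons => /memv_addP[u /vlineP[c ->]].
case=> v /IH[h size_h ->] ->.
exists (c *: 'X^k + h); last by rewrite lfun_polyD lfun_polyZ lfun_polyXn lfun_pow_apow.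
rewrite (leq_trans (size_polyD _ _)) // geq_max (leq_trans size_h) // andbT.
by rewrite (leq_trans (size_scale_leq _ _)) // size_polyXn.
Qed.

Lemma size_lfun_char_poly : size (lfun_char_poly La) = n.+1.
Proof.
rewrite /lfun_char_poly size_char_poly.
by rewrite (size_basis (X := in_tuple (mkseq (apow mul a) n)) a_cyclic) size_mkseq.
Qed.

Lemma lfun_poly_cyclic_eq0 (h : {poly F}) : (size h <= n)%N -> lfun_poly h La a = 0 -> h = 0.
Proof.
move=> size_h; rewrite (lfun_polyE_wide _ _ size_h) => sum0.
have /freeP free_basis : free (in_tuple (mkseq (apow mul a) n)) := basis_free a_cyclic.
apply/polyP => i; rewrite coef0.
have [lt_in|le_ni] := ltnP i n; last by rewrite nth_default // (leq_trans size_h).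
have lt_i : (i < size (mkseq (apow mul a) n))%N by rewrite size_mkseq.
apply: (free_basis (fun j => h`_j) _ (Ordinal lt_i)).
rewrite -(big_mkord xpredT (fun i => h`_i *: lfun_pow La i a)) in sum0.
rewrite -(big_mkord xpredT (fun i => h`_i *: (mkseq (apow mul a) n)`_i)).
rewrite size_mkseq -[RHS]sum0; apply: eq_big_nat => j /andP[_ lt_jn].
by rewrite nth_mkseq // lfun_pow_apow.
Qed.

Lemma lfun_char_poly_dvd g : lfun_poly g La a = 0 -> lfun_char_poly La %| g.
Proof.
set p := lfun_char_poly La => ga0; apply/modp_eq0P/lfun_poly_cyclic_eq0.
  by rewrite -ltnS -size_lfun_char_poly ltn_modp -size_poly_eq0 size_lfun_char_poly.
move: ga0; rewrite {1}(divp_eq g p) lfun_polyD lfun_polyM lfun_char_poly_annihilates.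
by rewrite lfunE /= linear0 add0r.
Qed.

(* Left multiplication by any y acts as a scalar multiple of L_a:
   only the a-component of y contributes, since a^k (k >= 2) annihilates. *)
Lemma mul_left_scalar y x : exists c, mul y x = c *: mul a x.
Proof.
have [h size_h ->] := cyclic_poly_repr y.
rewrite (@lfun_polyE_wide _ _ _ _ _ n.+1) ?(leq_trans size_h) // bimul_suml //.
rewrite big_ord_recl big1 ?addr0 => [|i _]; first by exists h`_0; rewrite bimulZl // id_lfunE.
by rewrite bimulZl // lfun_pow_apow apow_annihilates // scaler0.
Qed.

Lemma Lmul_image_annihilates z y : mul (mul a z) y = 0.
Proof.
have [h _ ->] := cyclic_poly_repr z.
rewrite -(LmulE mul_bilinear a) -lfun_poly_comm lfun_polyE bimul_suml //.
apply: big1 => i _; rewrite bimulZl // -lfun_powSr lfun_pow_apow apow_annihilates //.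
exact: scaler0.
Qed.

Lemma limg_Lmul (Q : {poly F}) :
  lfun_char_poly La = Q * 'X -> limg La = lker (lfun_poly Q La).
Proof.
move=> chiE; apply/subv_anti/andP; split.
  apply/subvP => _ /memv_imgP[z _ ->].
  by rewrite memv_ker -lfun_polyMX -chiE lfun_char_poly_annihilates lfunE.
apply/subvP => x; have [h _ ->] := cyclic_poly_repr x.
rewrite memv_ker -lfun_polyM => /eqP /lfun_char_poly_dvd.
have Q_neq0 : Q != 0.
  by apply/eqP => Q0; move: size_lfun_char_poly; rewrite chiE Q0 mul0r size_poly0.
rewrite chiE (dvdp_mul2l _ _ Q_neq0) => /divpK <-.
by rewrite lfun_polyMX lfun_poly_comm memv_img ?memvf.
Qed.

Lemma sqA_limg : sqA mul = limg La.
Proof.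
apply/subv_anti/andP; split.
  apply/span_subvP => _ /allpairsP[[x y] [_ _ ->]] /=.
  have [c ->] := mul_left_scalar x y.
  by rewrite memvZ // -(LmulE mul_bilinear a) memv_img ?memvf.
apply/subvP => _ /memv_imgP[z _ ->]; rewrite LmulE //.
pose e := vbasis (fullv : {vspace A}); have e_basis : basis_of fullv e := vbasisP fullv.
have e_mem (i : 'I_(\dim (fullv : {vspace A}))) : e`_i \in (e : seq A).
  by apply: mem_nth; rewrite size_tuple.
rewrite [a](coord_basis e_basis (memvf a)) bimul_suml //; apply: memv_suml => i _.
rewrite bimulZl // [z](coord_basis e_basis (memvf z)) bimul_sumr //; apply: memvZ.
apply: memv_suml => j _; rewrite bimulZr //; apply: memvZ.
by apply: memv_span; apply: allpairs_f; apply: e_mem.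
Qed.

Lemma sqA_annihilates x y : x \in sqA mul -> mul x y = 0.
Proof.
by rewrite sqA_limg => /memv_imgP[z _ ->]; rewrite LmulE // Lmul_image_annihilates.
Qed.

Lemma sqA_primary_decomposition (r : seq nat) (g : nat -> {poly F}) :
  uniq r -> {in r &, forall j k, j != k -> coprimep (g j) (g k)} ->
  lfun_char_poly La = (\prod_(j <- r) g j) * 'X ->
  sqA mul = (\sum_(j <- r) lker (lfun_poly (g j) La))%VS /\
  directv (\sum_(j <- r) lker (lfun_poly (g j) La))%VS.
Proof.
move=> r_uniq g_coprime chiE.
have [sumE dimE] := lker_lfun_poly_prod La r_uniq g_coprime.
by rewrite sqA_limg (limg_Lmul chiE) sumE directvE /= -sumE dimE.
Qed.

(* ker q(L_a) is a two-sided ideal as soon as it lies in A^2 = ker Q(L_a):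
   its elements left-annihilate A, and it is stable under L_a, hence under every
   left multiplication. *)
Lemma lker_lfun_poly_ideal (Q q : {poly F}) :
  lfun_char_poly La = Q * 'X -> q %| Q -> is_ideal mul (lker (lfun_poly q La)).
Proof.
move=> chiE q_dvd_Q x y x_ker; split.
  rewrite sqA_annihilates ?mem0v // sqA_limg (limg_Lmul chiE).
  exact: subvP (lker_lfun_poly_dvd La q_dvd_Q) _ x_ker.
have [c ->] := mul_left_scalar y x; apply: memvZ.
move: x_ker; rewrite !memv_ker -(LmulE mul_bilinear a) lfun_poly_comm => /eqP ->.
by rewrite linear0.
Qed.

End CyclicLeibnizAlgebra.

(* The exponents of chi / X: the multiplicity of the factor X drops by one. *)
Definition reduced_exponent (N : nat -> nat) (j : nat) : nat :=
  if j == 0%N then (N 0%N).-1 else N j.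

Section ReducedFactorization.
Variables (F : fieldType) (s : nat) (P : nat -> {poly F}) (N : nat -> nat).
Hypotheses (s_gt0 : (0 < s)%N) (P0 : P 0%N = 'X) (N0_gt0 : (0 < N 0%N)%N).

Lemma prod_factor_X :
  \prod_(j < s) P j ^+ N j = (\prod_(0 <= j < s) P j ^+ reduced_exponent N j) * 'X.
Proof.
rewrite -(big_mkord xpredT (fun j => P j ^+ N j)) !(big_ltn s_gt0) /=.
rewrite mulrAC /reduced_exponent /= P0 -exprSr prednK //; congr (_ * _).
by apply: eq_big_nat => -[].
Qed.

Lemma dvdp_prod_reduced j i : (j < s)%N -> (i <= N j)%N -> (j, i) != (0%N, N 0%N) ->
  P j ^+ i %| \prod_(0 <= k < s) P k ^+ reduced_exponent N k.
Proof.
move=> j_lt_s le_iN neq_ji.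
rewrite (bigD1_seq j) ?mem_index_iota ?iota_uniq //= dvdp_mulr // dvdp_exp2l //.
rewrite /reduced_exponent; case: eqP => [j0 | //]; subst j.
rewrite -ltnS prednK // ltn_neqAle le_iN andbT.
by apply: contraNneq neq_ji => ->.
Qed.

End ReducedFactorization.

Unset Implicit Arguments.

Theorem mainTheorem10 (F : fieldType) (A : vectType F) (mul : A -> A -> A)
  (a : A) (n : nat) (s : nat) (P : nat -> {poly F}) (N : nat -> nat) :
  bilinear_mul mul ->
  leibniz mul ->
  cyclic_basis mul a n ->
  (0 < s)%N ->
  (forall j, (j < s)%N -> P j \is monic /\ irreducible_poly (P j)) ->
  (forall j k, (j < s)%N -> (k < s)%N -> P j = P k -> j = k) ->
  P 0%N = 'X ->
  (forall j, (j < s)%N -> (0 < N j)%N) ->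
  lfun_char_poly (Lmul mul a) = \prod_(j < s) P j ^+ N j ->
  [/\ (forall x y, x \in sqA mul -> y \in sqA mul -> mul x y = 0),
      sqA mul = (Usp mul a P 0%N (N 0%N).-1 + \sum_(1%N <= j < s) Usp mul a P j (N j))%VS,
      directv (Usp mul a P 0%N (N 0%N).-1 + \sum_(1%N <= j < s) Usp mul a P j (N j))%VS &
      (forall j i, (j < s)%N -> (1 <= i <= N j)%N -> (j, i) != (0%N, N 0%N) ->
         is_ideal mul (Usp mul a P j i))].
Proof.
move=> mul_bilinear mul_leibniz a_cyclic s_gt0 P_irr P_inj P0 N_gt0 chiE.
pose g j := P j ^+ reduced_exponent N j.
have chi_gX : lfun_char_poly (Lmul mul a) = (\prod_(0 <= j < s) g j) * 'X.
  by rewrite chiE prod_factor_X ?N_gt0.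
have g_coprime : {in index_iota 0 s &, forall j k, j != k -> coprimep (g j) (g k)}.
  move=> j k; rewrite !mem_index_iota => /andP[_ j_lt_s] /andP[_ k_lt_s] neq_jk.
  have [[Pj_monic Pj_irr] [Pk_monic Pk_irr]] := (P_irr j j_lt_s, P_irr k k_lt_s).
  rewrite coprimep_expl // coprimep_expr // coprimep_monic_irreducible //.
  by apply: contra_neq neq_jk; apply: P_inj.
have [sqE sq_direct] := sqA_primary_decomposition mul_bilinear mul_leibniz a_cyclic
  (iota_uniq 0 _ : uniq (index_iota 0 s)) g_coprime chi_gX.
have UspE j : (1 <= j < s)%N -> Usp mul a P j (N j) = lker (lfun_poly (g j) (Lmul mul a)).
  by case: j.
split.
- by move=> x y x_sq _; exact: (sqA_annihilates mul_bilinear mul_leibniz a_cyclic y x_sq).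
- by rewrite (eq_big_nat _ _ UspE) sqE (big_ltn s_gt0).
- rewrite directvE /= (eq_big_nat _ _ UspE).
  rewrite (eq_big_nat _ _ (fun j lt_j => congr1 (fun U => \dim U) (UspE j lt_j))).
  by move: sq_direct; rewrite directvE /= !(big_ltn s_gt0).
move=> j i j_lt_s /andP[_ le_iN] neq_ji.
apply: (lker_lfun_poly_ideal mul_bilinear mul_leibniz a_cyclic chi_gX).
by apply: dvdp_prod_reduced; rewrite ?N_gt0.
Qed.
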